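(* Let $G$ be a graph on $n$ vertices. If $G$ is a forest, then $G$ is $(1,b)$-colorable for every integer $b \geq 4\sqrt{2}\sqrt{n}$. If $G$ is a triangle-free outerplanar graph, then $G$ is $(1,b)$-colorable for every integer $b \geq 4\sqrt{34/5}\sqrt{n} - 1$.
   Context: A set of vertices $X$ is $2$-independent if any two distinct vertices of $X$ are at distance at least $3$. A graph is $(a,b)$-colorable if its vertex set can be partitioned into $a$ independent sets and $b$ $2$-independent sets (some parts may be empty). *)

From mathcomp Require Import all_boot.
Set Implicit Arguments. Unset Strict Implicit. Unset Printing Implicit Defensive.

Definition simple_graph (T : finType) (e : rel T) : Prop :=
  symmetric e /\ irreflexive e.

Definition independent (T : finType) (e : rel T) (X : {set T}) : Prop :=
  forall x y, x \in X -> y \in X -> ~~ e x y.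

(* X is 2-independent: any two distinct vertices of X are at distance >= 3,
   i.e. they are neither adjacent nor have a common neighbour. *)
Definition two_independent (T : finType) (e : rel T) (X : {set T}) : Prop :=
  forall x y, x \in X -> y \in X -> x != y ->
    ~~ e x y /\ (forall z, ~~ (e x z && e z y)).

(* (a,b)-colorable: V is partitioned into a independent sets (colours inl i)
   and b 2-independent sets (colours inr j); parts may be empty. *)
Definition ab_colorable (T : finType) (e : rel T) (a b : nat) : Prop :=
  exists f : T -> ('I_a + 'I_b)%type,
    (forall i : 'I_a, independent e [set x | f x == inl i]) /\
    (forall j : 'I_b, two_independent e [set x | f x == inr j]).

Definition has_cycle (T : finType) (e : rel T) : Prop :=
  exists s : seq T, 3 <= size s /\ uniq s /\ cycle e s.

Definition forest (T : finType) (e : rel T) : Prop := ~ has_cycle e.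

Definition triangle_free (T : finType) (e : rel T) : Prop :=
  forall x y z, ~ [/\ e x y, e y z & e z x].

(* Outerplanar: the vertices can be placed (injectively) on a circle, in the
   cyclic order given by pos, so that the edges, drawn as chords, do not
   cross: there are no edges {a,b}, {c,d} with
   pos a < pos c < pos b < pos d. *)
Definition outerplanar (T : finType) (e : rel T) : Prop :=
  exists pos : T -> nat, injective pos /\
    forall a b c d, e a b -> e c d ->
      ~ (pos a < pos c /\ pos c < pos b /\ pos b < pos d).

(* Both bounds come from one coloring scheme. Order the vertices so that each has
   at most k later neighbors: k = 1 for forests, and k = 2 for triangle-free
   outerplanar graphs ordered by depth (the number of chords drawn over a vertex)
   and then by position. For a degree threshold d, double counting leaves at most
   2kn/(d+1) heavy vertices (degree > d), each of which gets its own 2-independent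
   color. An independent set I of light vertices gets the independent color: the
   light children of heavy vertices for forests; for outerplanar graphs, the light
   vertices hanging below a heavy vertex (its only neighbor with a chord over them)
   that beat all their hanging neighbors, which leaves every heavy vertex with at
   most 6 light neighbors outside I. Every other vertex is then within distance 2
   of fewer than d + 1 (resp. 3d + 1) later such vertices, so coloring greedily
   along the order needs that many more colors; d of order sqrt n gives the
   bounds. *)

From Stdlib Require Import Reals Lra.
From mathcomp Require Import all_boot zify.
Set Implicit Arguments. Unset Strict Implicit. Unset Printing Implicit Defensive.

Lemma fresh_color (s : seq nat) k : size s < k -> exists2 c, c < k & c \notin s.
Proof.
move=> ltsk; have [/hasP[c] | /hasPn full] := boolP (has (fun c => c \notin s) (iota 0 k)).
  by rewrite mem_iota add0n => /andP[_ ck] cs; exists c.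
have sub : {subset iota 0 k <= s} by move=> c /full; rewrite negbK.
by have := uniq_leq_size (iota_uniq 0 k) sub; rewrite size_iota leqNgt ltsk.
Qed.

Lemma ltn_lex (M a b c d : nat) : b < M -> d < M ->
  (a * M + b < c * M + d) = (a < c) || (a == c) && (b < d).
Proof.
move=> bM dM; have step x y z : x < M -> y.+1 <= z -> y * M + x < z * M.
  by move=> xM yz; apply: leq_trans (leq_mul yz (leqnn M)); rewrite mulSn; lia.
case: (ltngtP a c) => [ac | ca | ->] /=; last by rewrite ltn_add2l.
  by apply: leq_trans (step _ _ _ bM ac) (leq_addr _ _).
by apply/negbTE; rewrite -leqNgt ltnW // (leq_trans (step _ _ _ dM ca)) ?leq_addr.
Qed.

Lemma card_bigcup_le (T I : finType) (A : {pred I}) (F : I -> {set T}) :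
  #|\bigcup_(i in A) F i| <= \sum_(i in A) #|F i|.
Proof.
apply: (big_ind2 (fun (S : {set T}) n => #|S| <= n)) => //; first by rewrite cards0.
by move=> S1 n1 S2 n2 h1 h2; apply: leq_trans (leq_card_setU S1 S2).1 (leq_add h1 h2).
Qed.

Section GreedyColoring.
Variables (T : finType) (R : rel T) (r : T -> nat).
Hypothesis r_inj : injective r.

Lemma greedy_coloring (k : nat) (S : {set T}) :
  {in S, forall u, #|[set v in S | (r u < r v) && R u v]| < k} ->
  exists g : T -> nat, {in S, forall u, g u < k} /\
    {in S &, forall u v, r u < r v -> R u v -> g u != g v}.
Proof.
elim: {S}_.+1 {-2}S (ltnSn #|S|) => // n IH S; rewrite ltnS => cardS fewS.
have [-> | [x0 Sx0]] := set_0Vmem S; first by exists (fun=> 0); split=> ?; rewrite inE.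
case: (arg_minnP r Sx0) => m Sm m_min; have {}Sm : m \in S := Sm.
have fewS' : {in S :\ m, forall u, #|[set v in S :\ m | (r u < r v) && R u v]| < k}.
  move=> u /setD1P[_ Su]; apply: leq_ltn_trans (fewS u Su); apply: subset_leq_card.
  by apply/subsetP => v; rewrite !inE => /andP[/andP[_ ->] ->].
have [|g' [g'k g'ok]] := IH (S :\ m) _ fewS'.
  by move: cardS; rewrite (cardsD1 m S) Sm.
set L := [seq g' v | v <- enum [set v in S :\ m | (r m < r v) && R m v]].
have [c ck cL] : exists2 c, c < k & c \notin L.
  by apply: fresh_color; rewrite size_map -cardE; apply: leq_ltn_trans (fewS m Sm);
    apply: subset_leq_card; apply/subsetP => v; rewrite !inE => /andP[/andP[_ ->] ->].
exists (fun x => if x == m then c else g' x); split.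
  by move=> u Su; case: eqP => // /eqP um; apply: g'k; rewrite in_setD1 um.
move=> u v Su Sv ruv Ruv.
have vm : v != m by apply: contraTneq ruv => ->; rewrite -leqNgt m_min.
rewrite (negbTE vm); case: (eqVneq u m) => [um | um]; last first.
  by apply: g'ok; rewrite ?in_setD1 ?um ?vm.
subst u; apply: contraNneq cL => ->; apply: map_f.
by rewrite mem_enum !inE vm Sv ruv Ruv.
Qed.

End GreedyColoring.

Section OneBColoring.
Variables (T : finType) (e : rel T).
Hypothesis e_sym : symmetric e.

Definition dist_le2 (u v : T) := e u v || [exists z, e u z && e z v].

Lemma dist_le2_sym u v : dist_le2 u v = dist_le2 v u.
Proof.
suff imp x y : dist_le2 x y -> dist_le2 y x by apply/idP/idP; apply: imp.
case/orP=> [exy | /existsP[z /andP[exz ezy]]]; apply/orP; first by left; rewrite e_sym.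
by right; apply/existsP; exists z; rewrite e_sym ezy e_sym.
Qed.

Lemma ab_colorable1_of_coloring (I : {set T}) (col : T -> nat) b :
  {in I &, forall x y, ~~ e x y} ->
  (forall x, x \notin I -> col x < b) ->
  (forall x y, x \notin I -> y \notin I -> x != y -> col x = col y -> ~~ dist_le2 x y) ->
  ab_colorable e 1 b.
Proof.
move=> indI colb col_ok.
pose f x : 'I_1 + 'I_b := if insub (col x) is Some o then inr o else inl ord0.
have f_inr x : x \notin I -> exists2 o : 'I_b, f x = inr o & val o = col x.
  by move=> xI; rewrite /f; case: insubP => [o _ <- | /negP[]]; [exists o | exact: colb].
exists (fun x => if x \in I then inl ord0 else f x); split.
  move=> i x y; rewrite !inE.
  case: ifP => [xI | /negbT/f_inr[o -> _]] //; case: ifP => [yI | /negbT/f_inr[o -> _]] //.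
  by move=> _ _; apply: indI.
move=> j x y; rewrite !inE; case: ifP => // /negbT xI; case: ifP => // /negbT yI.
have [ox -> vox] := f_inr x xI; have [oy -> voy] := f_inr y yI.
move=> /eqP[oxj] /eqP[oyj] xy; have := col_ok x y xI yI xy.
rewrite -vox -voy oxj oyj => /(_ erefl); rewrite /dist_le2 negb_or => /andP[-> nz].
by split=> // z; apply: contra nz => ezzy; apply/existsP; exists z.
Qed.

Lemma ab_colorable1_split (H I : {set T}) (r : T -> nat) (k b : nat) :
  injective r -> {in I &, forall x y, ~~ e x y} -> {in I, forall x, x \notin H} ->
  (forall u, u \notin I -> u \notin H ->
     #|[set v | [&& (v \notin I) && (v \notin H), r u < r v & dist_le2 u v]]| < k) ->
  #|H| + k <= b -> ab_colorable e 1 b.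
Proof.
move=> r_inj indI IH few Hkb.
set S := [set x | (x \notin I) && (x \notin H)].
have [g [gk g_ok]] : exists g : T -> nat, {in S, forall u, g u < k} /\
    {in S &, forall u v, r u < r v -> dist_le2 u v -> g u != g v}.
  apply: greedy_coloring => // u; rewrite inE => /andP[uI uH].
  apply: leq_ltn_trans (few u uI uH); apply: subset_leq_card; apply/subsetP => v.
  by rewrite !inE => /andP[/andP[-> ->] ->].
pose col x := if x \in H then index x (enum H) else #|H| + g x.
have indexH x : x \in H -> index x (enum H) < #|H| by rewrite cardE index_mem mem_enum.
apply: (ab_colorable1_of_coloring (I := I) (col := col)) => // [x xI | x y xI yI xy].
  rewrite /col; case: ifP => [/indexH xH | xH]; first by lia.
  by have := gk x; rewrite inE xI xH => /(_ erefl); lia.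
rewrite /col; case: ifP => xH; case: ifP => yH.
- by move/(congr1 (nth x (enum H))); rewrite !nth_index ?mem_enum // => /eqP; rewrite (negbTE xy).
- by have := indexH x xH; lia.
- by have := indexH y yH; lia.
move/addnI => gxy; have Sx : x \in S by rewrite inE xI xH.
have Sy : y \in S by rewrite inE yI yH.
apply/negP => dxy; have : r x != r y by apply: contra xy => /eqP/r_inj->.
case: ltngtP => // [rxy | ryx] _.
  by move: (g_ok x y Sx Sy rxy dxy); rewrite gxy eqxx.
by move: (g_ok y x Sy Sx ryx); rewrite dist_le2_sym gxy eqxx => /(_ dxy).
Qed.

Lemma ab_colorable1_of_card b : #|T| <= b -> ab_colorable e 1 b.
Proof.
move=> Tb; have r_inj : injective (fun x : T => val (enum_rank x)).
  by move=> x y /val_inj /enum_rank_inj.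
apply: (ab_colorable1_split (H := setT) (I := set0) (k := 0) r_inj) => //.
- by move=> x y; rewrite inE.
- by move=> x; rewrite inE.
- by move=> u _; rewrite inE.
- by rewrite cardsT addn0.
Qed.

End OneBColoring.

Section Degeneracy.
Variables (T : finType) (e : rel T).
Hypotheses (e_sym : symmetric e) (e_irr : irreflexive e).

Definition deg x := #|[set y | e x y]|.
Definition heavy d := [set x | d < deg x].
Definition later_nbrs (r : T -> nat) x := [set y | e x y && (r x < r y)].

Lemma notin_heavy d x : (x \notin heavy d) = (deg x <= d).
Proof. by rewrite inE -leqNgt. Qed.

Lemma degenerate_rank k :
  (forall A : {set T}, A != set0 -> exists2 x, x \in A & #|[set y in A | e x y]| <= k) ->
  exists r : T -> nat, injective r /\ forall x, #|later_nbrs r x| <= k.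
Proof.
move=> low.
suff /(_ setT) [r [r_inj rk]] : forall A : {set T}, exists r : T -> nat,
    {in A &, injective r} /\ {in A, forall x, #|[set y in A | e x y && (r x < r y)]| <= k}.
  exists r; split=> [x y | x]; first exact: r_inj.
  by apply: leq_trans (rk x (in_setT x)); apply: subset_leq_card; apply/subsetP => y;
    rewrite !inE.
move=> A; elim: {A}_.+1 {-2}A (ltnSn #|A|) => // n IH A; rewrite ltnS => cardA.
have [-> | A0] := eqVneq A set0.
  by exists (fun=> 0); split=> [x | x]; rewrite inE.
have [x0 Ax0 low_x0] := low A A0.
have [|r [r_inj rk]] := IH (A :\ x0); first by move: cardA; rewrite (cardsD1 x0 A) Ax0.
exists (fun y => if y == x0 then 0 else (r y).+1); split.
  move=> x y Ax Ay; case: eqVneq => [-> | xx0]; case: eqVneq => [-> | yx0] //.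
  by move=> [] /r_inj; apply; rewrite in_setD1 ?xx0 ?yx0.
move=> x Ax; case: eqVneq => [-> | xx0].
  apply: leq_trans low_x0; apply: subset_leq_card; apply/subsetP => y.
  by rewrite !inE => /andP[-> /andP[-> _]].
apply: leq_trans (rk x _); last by rewrite in_setD1 xx0.
apply: subset_leq_card; apply/subsetP => y; rewrite !inE => /andP[Ay /andP[exy]].
by case: eqVneq => // yx0 lt; rewrite Ay exy -ltnS lt.
Qed.

Lemma deg_later_earlier (r : T -> nat) x : injective r ->
  deg x = #|later_nbrs r x| + #|[set y | e x y && (r y < r x)]|.
Proof.
move=> r_inj; rewrite /deg -(cardsID [set y | r x < r y]); congr (_ + _); apply: eq_card => y.
  by rewrite !inE andbC.
rewrite !inE -leqNgt leq_eqVlt; case: (eqVneq x y) => [<- | xy]; first by rewrite e_irr andbF.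
by rewrite (inj_eq r_inj) eq_sym (negbTE xy) andbC.
Qed.

Lemma sum_deg (r : T -> nat) : injective r -> \sum_x deg x = 2 * \sum_x #|later_nbrs r x|.
Proof.
move=> r_inj; have card_sum (P : pred T) : #|[set y | P y]| = \sum_y P y.
  by rewrite -sum1dep_card big_mkcond; apply: eq_bigr => y _; case: (P y).
under eq_bigr do rewrite (deg_later_earlier _ r_inj).
rewrite big_split /= mul2n -addnn; congr (_ + _).
under eq_bigr do rewrite card_sum; rewrite exchange_big /=.
by apply: eq_bigr => y _; rewrite card_sum; apply: eq_bigr => x _; rewrite e_sym.
Qed.

Lemma card_heavy_le (r : T -> nat) k d : injective r -> (forall x, #|later_nbrs r x| <= k) ->
  #|heavy d| * d.+1 <= 2 * k * #|T|.
Proof.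
move=> r_inj rk; apply: (@leq_trans (\sum_x deg x)).
  rewrite -sum_nat_cond_const [X in _ <= X](bigID (fun x => d < deg x)) /=.
  by apply: leq_trans (leq_addr _ _); apply: leq_sum => x.
rewrite (sum_deg r_inj) -mulnA leq_pmul2l // -sum1_card big_distrr /= muln1.
by apply: leq_sum => x _.
Qed.

Lemma dist_le2_later_cases (r : T -> nat) u v : injective r -> r u < r v -> dist_le2 e u v ->
  [\/ v \in later_nbrs r u,
      exists2 z, z \in later_nbrs r u & e z v /\ v != u |
      exists z, [/\ u \in later_nbrs r z, v \in later_nbrs r z & v != u]].
Proof.
move=> r_inj ruv; have vu : v != u by apply: contraTneq ruv => ->; rewrite ltnn.
case/orP => [euv | /existsP[z /andP[euz ezv]]]; first by apply: Or31; rewrite inE euv ruv.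
have : r z != r u by apply: contraTneq euz => /r_inj->; rewrite e_irr.
case: ltngtP => // [rzu | ruz] _.
  by apply: Or33; exists z; rewrite !inE e_sym euz ezv rzu (ltn_trans rzu ruv).
by apply: Or32; exists z; rewrite ?inE ?euz.
Qed.

Lemma later_dist_le2_sub (r : T -> nat) (keep : pred T) u : injective r ->
  [set v | [&& keep v, r u < r v & dist_le2 e u v]] \subset
    later_nbrs r u
    :|: \bigcup_(z in later_nbrs r u) ([set y | e z y && keep y] :\ u)
    :|: \bigcup_(z | u \in later_nbrs r z) (later_nbrs r z :\ u).
Proof.
move=> r_inj; apply/subsetP => v; rewrite inE => /and3P[kv ruv duv]; rewrite !in_setU.
case: (dist_le2_later_cases r_inj ruv duv) => [-> // | [z zu [ezv vu]] | [z [uz zv vu]]].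
  by apply/orP; left; apply/orP; right; apply/bigcupP; exists z; rewrite // !inE vu ezv.
by apply/orP; right; apply/bigcupP; exists z; rewrite // in_setD1 vu.
Qed.

Lemma card_later_dist_le2 (r : T -> nat) (keep : pred T) u k m :
  injective r -> keep u -> (forall x, #|later_nbrs r x| <= k) ->
  {in later_nbrs r u, forall z, #|[set y | e z y && keep y]| <= m} ->
  #|[set v | [&& keep v, r u < r v & dist_le2 e u v]]| <= k * m + deg u * k.-1.
Proof.
move=> r_inj ku rk small.
apply: leq_trans (subset_leq_card (later_dist_le2_sub keep u r_inj)) _.
apply: leq_trans (leq_card_setU _ _).1 _; apply: leq_add.
  apply: leq_trans (leq_card_setU _ _).1 _.
  apply: leq_trans (leq_add (leqnn _) (card_bigcup_le _ _)) _.
  rewrite -sum1_card -big_split /=; apply: leq_trans (_ : \sum_(z in later_nbrs r u) m <= _).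
    apply: leq_sum => z uz; apply: leq_trans (small z uz); rewrite [X in _ <= X](cardsD1 u).
    by move: uz; rewrite !inE e_sym ku => /andP[-> _].
  by rewrite sum_nat_const leq_mul2r rk orbT.
apply: leq_trans (card_bigcup_le _ _) _.
apply: leq_trans (_ : \sum_(z | u \in later_nbrs r z) k.-1 <= _).
  apply: leq_sum => z zu; have {}zu : u \in later_nbrs r z := zu.
  by move: (rk z); rewrite (cardsD1 u) zu; lia.
rewrite sum_nat_cond_const leq_mul2r; apply/orP; right; apply: subset_leq_card.
by apply/subsetP => z; rewrite !inE e_sym => /andP[-> _].
Qed.

End Degeneracy.

Section Forest.
Variables (T : finType) (e : rel T).
Hypotheses (e_sym : symmetric e) (e_irr : irreflexive e) (e_forest : forest e).

Lemma chord_has_cycle x s y : path e x s -> uniq (x :: s) -> y \in s -> y != head y s ->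
  e x y -> has_cycle e.
Proof.
move=> ps us ys yh exy; case/splitPr: ys ps us yh => p q ps us yh.
have p0 : p != [::] by case: p ps us yh => //=; rewrite eqxx.
exists (x :: rcons p y); split; [|split].
- by case: p p0 {ps us yh} => //= a p _; rewrite size_rcons.
- by move: us; rewrite -cat_rcons -cat_cons cat_uniq => /andP[].
- rewrite /cycle rcons_path last_rcons (e_sym y x) exy andbT.
  by move: ps; rewrite -cat_rcons cat_path => /andP[].
Qed.

Lemma forest_low_vertex (A : {set T}) : A != set0 ->
  exists2 x, x \in A & #|[set y in A | e x y]| <= 1.
Proof.
move=> A0; apply/exists_inP; apply: contraT => /exists_inPn high.
have [a Aa] := set0Pn _ A0.
(* A neighbor of the head x off the path extends the path; of two neighbors on
   it, one is not the next vertex and closes a cycle. So paths in A grow forever. *)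
have grow m : exists x s, [/\ path e x s, uniq (x :: s), {subset x :: s <= A} & size s = m].
  elim: m => [|m [x [s [ps us sA <-]]]].
    by exists a, [::]; split=> // y; rewrite inE => /eqP->.
  have /card_gt1P[y1 [y2 [+ + y12]]] : 1 < #|[set y in A | e x y]|.
    by rewrite ltnNge high ?sA ?mem_head.
  rewrite !inE => /andP[Ay1 exy1] /andP[Ay2 exy2].
  have extend y : y \in A -> e x y -> y \notin x :: s -> exists z t,
      [/\ path e z t, uniq (z :: t), {subset z :: t <= A} & size t = (size s).+1].
    move=> Ay exy ys; exists y, (x :: s); split=> //=; first by rewrite e_sym exy.
    - by rewrite ys.
    - by move=> z; rewrite inE => /predU1P[-> | /sA].
  have [ys1 | /(extend _ Ay1 exy1) //] := boolP (y1 \in x :: s).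
  have [ys2 | /(extend _ Ay2 exy2) //] := boolP (y2 \in x :: s).
  have yx y : e x y -> y != x by apply: contraTneq => ->; rewrite e_irr.
  move: ys1 ys2; rewrite !inE (negbTE (yx _ exy1)) (negbTE (yx _ exy2)) /= => ys1 ys2.
  have [h1 | h1] := eqVneq y1 (head y1 s); last first.
    by case: e_forest; apply: (chord_has_cycle ps us ys1).
  have h2 : y2 != head y2 s by case: s ys1 h1 {ps us sA ys2 extend} => //= z s _ <-; rewrite eq_sym.
  by case: e_forest; apply: (chord_has_cycle ps us ys2).
have [x [s [_ us _ ss]]] := grow #|T|.
by have := card_uniqP us; rewrite /= ss => /(congr1 (leq^~ #|T|)); rewrite max_card ltnn.
Qed.

Lemma forest_rank : exists r : T -> nat, injective r /\ forall x, #|later_nbrs e r x| <= 1.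
Proof. exact/degenerate_rank/forest_low_vertex. Qed.

End Forest.

Section ForestColoring.
Variables (T : finType) (e : rel T) (r : T -> nat) (d : nat).
Hypotheses (e_sym : symmetric e) (e_irr : irreflexive e).
Hypotheses (r_inj : injective r) (r_tree : forall x, #|later_nbrs e r x| <= 1).

Let parent_uniq x y z : y \in later_nbrs e r x -> z \in later_nbrs e r x -> y = z.
Proof. by move=> xy xz; apply: (elimT card_le1_eqP (r_tree x)). Qed.

Definition heavy_children :=
  [set x | (x \notin heavy e d) && [exists y, (y \in later_nbrs e r x) && (y \in heavy e d)]].

Lemma heavy_children_indep : {in heavy_children &, forall x y, ~~ e x y}.
Proof.
suff lt_no_edge x y : x \in heavy_children -> y \in heavy_children -> r x < r y -> ~~ e x y.
  move=> x y xI yI; apply/negP => exy; have : r x != r y.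
    by apply: contraTneq exy => /r_inj->; rewrite e_irr.
  case: ltngtP => // [rxy | ryx] _; first by case/negP: (lt_no_edge x y xI yI rxy).
  by case/negP: (lt_no_edge y x yI xI ryx); rewrite e_sym.
rewrite !inE => /andP[_ /existsP[x' /andP[xx' x'H]]] /andP[yl _] rxy; apply/negP => exy.
have xy : y \in later_nbrs e r x by rewrite inE exy rxy.
by rewrite (parent_uniq xx' xy) inE in x'H; rewrite x'H in yl.
Qed.

Lemma forest_few_conflicts u : u \notin heavy_children -> u \notin heavy e d ->
  #|[set v | [&& (v \notin heavy_children) && (v \notin heavy e d), r u < r v & dist_le2 e u v]]|
    < d.+1.
Proof.
move=> uI uH.
apply: leq_ltn_trans (card_later_dist_le2 e_sym e_irr (k := 1) (m := d) r_inj _ r_tree _) _.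
- by rewrite uI uH.
- move=> z uz; apply: (@leq_trans (deg e z)).
    by apply: subset_leq_card; apply/subsetP => y; rewrite !inE => /andP[->].
  rewrite -notin_heavy; apply: contra uI => zH; rewrite inE uH.
  by apply/existsP; exists z; rewrite uz.
- by rewrite mul1n muln0 addn0.
Qed.

Lemma forest_colorable b : #|heavy e d| + d.+1 <= b -> ab_colorable e 1 b.
Proof.
apply: (ab_colorable1_split e_sym (I := heavy_children) r_inj heavy_children_indep).
- by move=> x; rewrite inE => /andP[].
- exact: forest_few_conflicts.
Qed.

End ForestColoring.

Section Outerplanar.
Variables (T : finType) (e : rel T) (pos : T -> nat) (d : nat).
Hypotheses (e_sym : symmetric e) (e_irr : irreflexive e) (pos_inj : injective pos).
Hypothesis e_noncrossing : forall a b a' b', e a b -> e a' b' ->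
  ~ (pos a < pos a' /\ pos a' < pos b /\ pos b < pos b').

Definition between x y t := (pos x < pos t < pos y) || (pos y < pos t < pos x).
Definition covers x t := [exists y, e x y && between x y t].
Definition spanning x := [set q : T * T | e q.1 q.2 && (pos q.1 < pos x < pos q.2)].
Definition depth x := #|spanning x|.

Lemma coversP x t : reflect (exists2 y, e x y & between x y t) (covers x t).
Proof. by apply: (iffP existsP) => [[y /andP[]] | [y exy bxyt]]; exists y; rewrite ?exy. Qed.

Lemma betweenC x y t : between x y t = between y x t.
Proof. by rewrite /between orbC. Qed.

Lemma pos_neq x y : x != y -> pos x != pos y.
Proof. by rewrite (inj_eq pos_inj). Qed.

Lemma edge_neq x y : e x y -> x != y.
Proof. by apply: contraTneq => ->; rewrite e_irr. Qed.

Lemma nested_chord a b x y : e a b -> e x y -> between a b x ->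
  (pos a <= pos y <= pos b) || (pos b <= pos y <= pos a).
Proof.
move=> eab exy; have eba : e b a by rewrite e_sym.
have eyx : e y x by rewrite e_sym.
have := e_noncrossing eab exy; have := e_noncrossing eba exy.
have := e_noncrossing eyx eab; have := e_noncrossing eyx eba.
by rewrite /between; lia.
Qed.

Lemma covers_asym x t : covers x t -> ~~ covers t x.
Proof.
case/coversP => y exy bt; apply/negP => /coversP[z etz bx].
by have := nested_chord exy etz bt; move: bt bx; rewrite /between; lia.
Qed.

Lemma spanning_sub x t : e x t -> ~~ covers t x -> spanning x \subset spanning t.
Proof.
move=> ext ntx; apply/subsetP => -[a c]; rewrite !inE /= => /andP[eac ax].
rewrite eac /=; have nested := nested_chord eac ext.
have [at_ | ta] := eqVneq a t.
  by case/negP: ntx; apply/coversP; exists c; rewrite -?at_ // /between ax.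
have [ct | tc] := eqVneq c t.
  case/negP: ntx; apply/coversP; exists a; first by rewrite -ct e_sym.
  by rewrite /between -ct ax orbT.
move: nested (pos_neq ta) (pos_neq tc); rewrite /between ax; lia.
Qed.

Lemma covers_not_sub x t : covers x t -> ~~ (spanning t \subset spanning x).
Proof.
case/coversP => y exy bt; apply/subsetPn.
have eyx : e y x by rewrite e_sym.
by case/orP: bt => bt; [exists (x, y) | exists (y, x)]; rewrite !inE /= ?ltnn ?andbF ?bt ?exy ?eyx.
Qed.

Lemma depth_lt_of_covers x t : e x t -> covers x t -> depth x < depth t.
Proof.
move=> ext cxt; apply: proper_card; rewrite properE covers_not_sub //.
by rewrite spanning_sub ?covers_asym.
Qed.

Lemma depth_eq x t : e x t -> ~~ covers x t -> ~~ covers t x -> depth x = depth t.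
Proof.
move=> ext nxt ntx; rewrite /depth; suff -> : spanning x = spanning t by [].
by apply/eqP; rewrite eqEsubset !spanning_sub // e_sym.
Qed.

Lemma ltn_depth x t : e x t -> (depth x < depth t) = covers x t.
Proof.
move=> ext; apply/idP/idP; last exact: depth_lt_of_covers.
have etx : e t x by rewrite e_sym.
apply: contraTT => nxt; rewrite -leqNgt; have [ctx | ntx] := boolP (covers t x).
  exact/ltnW/depth_lt_of_covers.
by rewrite (depth_eq ext).
Qed.

Lemma eqn_depth x t : e x t -> (depth x == depth t) = ~~ covers x t && ~~ covers t x.
Proof.
move=> ext; have etx : e t x by rewrite e_sym.
by rewrite eqn_leq (leqNgt (depth x)) (leqNgt (depth t)) !ltn_depth // andbC.
Qed.

Lemma covers_of_nbrs_left t x1 x2 : e t x1 -> e t x2 -> pos x1 < pos x2 < pos t -> covers t x2.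
Proof. by move=> etx1 _ lt; apply/coversP; exists x1; rewrite // /between lt orbT. Qed.

Lemma covers_of_nbrs_right t x1 x2 : e t x1 -> e t x2 -> pos t < pos x1 < pos x2 -> covers t x1.
Proof. by move=> _ etx2 lt; apply/coversP; exists x2; rewrite // /between lt. Qed.

Definition aligned x1 x2 x3 x4 :=
  (pos x1 < pos x2 < pos x3) && (pos x3 < pos x4)
  || (pos x4 < pos x3 < pos x2) && (pos x2 < pos x1).

Hypothesis e_triangle_free : triangle_free e.

Lemma no_triangle a b c : e a b -> e b c -> e a c -> False.
Proof.
by move=> eab ebc eac; apply: (e_triangle_free (x := a) (y := b) (z := c)); split; rewrite // e_sym.
Qed.

Lemma covering_nbr_unique t x1 x2 : e t x1 -> e t x2 -> covers x1 t -> covers x2 t -> x1 = x2.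
Proof.
move=> etx1 etx2 /coversP[y1 exy1 b1] /coversP[y2 exy2 b2].
case: (eqVneq x1 x2) => // x12; exfalso.
have y1x2 : y1 != x2 by apply: contraTneq etx2 => <-; apply/negP; exact: no_triangle etx1 exy1.
have y2x1 : y2 != x1 by apply: contraTneq etx1 => <-; apply/negP; exact: no_triangle etx2 exy2.
have ey1x1 : e y1 x1 by rewrite e_sym.
have ey2x2 : e y2 x2 by rewrite e_sym.
have := nested_chord exy1 etx2 b1; have := nested_chord exy2 etx1 b2.
have := e_noncrossing ey2x2 exy1; have := e_noncrossing ey1x1 exy2.
by move: b1 b2 (pos_neq x12) (pos_neq y1x2) (pos_neq y2x1); rewrite /between; lia.
Qed.

Lemma covering_nbrs_square_lt t t' w w' : pos t < pos t' -> e t t' ->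
  ~~ covers t t' -> ~~ covers t' t -> e w t -> covers w t -> e w' t' -> covers w' t' ->
  e w w' /\ [/\ pos w < pos t, pos t < pos t' & pos t' < pos w'].
Proof.
move=> lt ett' ntt' nt't ewt /coversP[b ewb bb] ew't' /coversP[a ew'a ba].
have et't : e t' t by rewrite e_sym.
have etw : e t w by rewrite e_sym.
have et'w' : e t' w' by rewrite e_sym.
have eaw' : e a w' by rewrite e_sym.
have wt' : w != t' by apply: contraNneq nt't => wt'; apply/coversP; exists b; rewrite -?wt'.
have w't : w' != t by apply: contraNneq ntt' => w't; apply/coversP; exists a; rewrite -?w't.
have bt' : b != t'.
  apply: contraNneq nt't => bt'; apply/coversP; exists w; first by rewrite e_sym -bt'.
  by rewrite betweenC -bt'.
have at_ : a != t.
  apply: contraNneq ntt' => at_; apply/coversP; exists w'; first by rewrite e_sym -at_.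
  by rewrite betweenC -at_.
have nw : ~~ between t w t' by apply: contra ntt' => bw; apply/coversP; exists w.
have nw' : ~~ between t' w' t by apply: contra nt't => bw'; apply/coversP; exists w'.
have [wt [tb t'b]] : pos w < pos t /\ pos t < pos b /\ pos t' < pos b.
  move: bb nw (pos_neq wt') (pos_neq bt') (pos_neq (edge_neq ewt)) (nested_chord ewb ett' bb).
  by rewrite /between; clear -lt; lia.
have [t'w' [at' a_t]] : pos t' < pos w' /\ pos a < pos t' /\ pos a < pos t.
  move: ba nw' (pos_neq w't) (pos_neq at_) (pos_neq (edge_neq ew't')) (nested_chord ew'a et't ba).
  by rewrite /between; clear -lt; lia.
have w'b : pos w' <= pos b.
  by move: (nested_chord ewb et'w'); rewrite /between; clear -wt lt t'b; lia.
have aw : pos a <= pos w.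
  by move: (nested_chord ew'a etw); rewrite /between; clear -a_t lt t'w'; lia.
(* The chords [a w'] and [w b] would cross unless they share an endpoint. *)
have [aw_ | bw'] : pos a = pos w \/ pos b = pos w'.
  by move: (e_noncrossing eaw' ewb); clear -wt lt t'w' w'b aw; lia.
- by split=> //; rewrite -(pos_inj aw_) e_sym.
- by split=> //; rewrite -(pos_inj bw').
Qed.

Lemma covering_nbrs_square t t' w w' : e t t' -> ~~ covers t t' -> ~~ covers t' t ->
  e w t -> covers w t -> e w' t' -> covers w' t' -> e w w' /\ aligned w t t' w'.
Proof.
wlog lt : t t' w w' / pos t < pos t'.
  move=> gen ett' n1 n2 ewt cwt ew't' cw't'; have := pos_neq (edge_neq ett').
  case: ltngtP => // [lt | gt] _; first exact: gen.
  have et't : e t' t by rewrite e_sym.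
  have [ew'w al] := gen t' t w' w gt et't n2 n1 ew't' cw't' ewt cwt.
  by split; [rewrite e_sym | move: al; rewrite /aligned; lia].
move=> ett' n1 n2 ewt cwt ew't' cw't'.
have [eww' order] := covering_nbrs_square_lt lt ett' n1 n2 ewt cwt ew't' cw't'.
by split=> //; rewrite /aligned; case: order => -> -> ->.
Qed.

Lemma aligned_square_unique w w' t1 t1' t2 t2' : e w t1 -> e w t2 ->
  e t1 t1' -> e t2 t2' -> e w' t1' -> e w' t2' ->
  aligned w t1 t1' w' -> aligned w t2 t2' w' -> t1 = t2.
Proof.
wlog le : t1 t1' t2 t2' / pos t1 <= pos t2.
  move=> gen ewt1 ewt2 e1 e2 e1' e2' al1 al2.
  case: (leqP (pos t1) (pos t2)) => [le | /ltnW le]; first exact: (gen t1 t1' t2 t2').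
  by apply/esym; apply: (gen t2 t2' t1 t1').
move=> ewt1 ewt2 e1 e2 e1' e2' al1 al2; apply/eqP; apply: contraT => t12.
have lt : pos t1 < pos t2 by rewrite ltn_neqAle pos_neq.
have t1't2 : t1' != t2 by apply: contraTneq e1 => ->; apply/negP => /(no_triangle ewt1); exact.
have t2't1 : t2' != t1 by apply: contraTneq e2 => ->; apply/negP => /(no_triangle ewt2); exact.
have et2't2 : e t2' t2 by rewrite e_sym.
have et1w : e t1 w by rewrite e_sym.
have et1'w' : e t1' w' by rewrite e_sym.
have := e_noncrossing ewt2 et1'w'; have := e_noncrossing ewt2 e1.
have := e_noncrossing et2't2 et1w; have := e_noncrossing e2' et1w.
by move: al1 al2 (pos_neq t1't2) (pos_neq t2't1); rewrite /aligned; clear -lt; lia.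
Qed.

Lemma card_covering_nbrs u : #|[set y | e u y && covers y u]| <= 1.
Proof.
apply/card_le1_eqP => x y; rewrite !inE => /andP[ex cx] /andP[ey cy].
by rewrite (covering_nbr_unique ex ey cx cy).
Qed.

Lemma card_uncovered_nbrs_left u : #|[set y | [&& e u y, ~~ covers u y & pos y < pos u]]| <= 1.
Proof.
apply/card_le1_eqP => x y; rewrite !inE => /and3P[ex nx xu] /and3P[ey ny yu].
case: (eqVneq x y) => [-> // | xy]; exfalso; move: (pos_neq xy).
case: (ltngtP (pos x) (pos y)) => // [lt | gt] _.
- by rewrite (covers_of_nbrs_left ex ey) ?lt ?yu in ny.
- by rewrite (covers_of_nbrs_left ey ex) ?gt ?xu in nx.
Qed.

Lemma card_uncovered_nbrs_right u : #|[set y | [&& e u y, ~~ covers u y & pos u < pos y]]| <= 1.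
Proof.
apply/card_le1_eqP => x y; rewrite !inE => /and3P[ex nx ux] /and3P[ey ny uy].
case: (eqVneq x y) => [-> // | xy]; exfalso; move: (pos_neq xy).
case: (ltngtP (pos x) (pos y)) => // [lt | gt] _.
- by rewrite (covers_of_nbrs_right ex ey) ?lt ?ux in nx.
- by rewrite (covers_of_nbrs_right ey ex) ?gt ?uy in ny.
Qed.

Lemma card_uncovered_nbrs w : #|[set t | e w t && ~~ covers w t]| <= 3.
Proof.
set A1 := [set t | e w t && covers t w].
set A2 := [set t | [&& e w t, ~~ covers w t & pos t < pos w]].
set A3 := [set t | [&& e w t, ~~ covers w t & pos w < pos t]].
have sub : [set t | e w t && ~~ covers w t] \subset A1 :|: A2 :|: A3.
  apply/subsetP => t; rewrite !inE => /andP[ewt ->]; rewrite ewt /=.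
  by case: (covers t w) => //=; have := pos_neq (edge_neq ewt); case: ltngtP.
apply: leq_trans (subset_leq_card sub) _; apply: leq_trans (leq_card_setU _ _).1 _.
rewrite -[3]/(2 + 1); apply: leq_add; last exact: card_uncovered_nbrs_right.
apply: leq_trans (leq_card_setU _ _).1 _.
exact: (leq_add (card_covering_nbrs w) (card_uncovered_nbrs_left w)).
Qed.

Definition depth_rank x :=
  (#|{: T * T}| - depth x) * (\max_y pos y).+1 + (\max_y pos y - pos x).

Lemma depth_rank_lt u v :
  (depth_rank u < depth_rank v) = (depth v < depth u) || (depth v == depth u) && (pos v < pos u).
Proof.
have pos_le x : pos x <= \max_y pos y by apply: leq_bigmax.
have depth_le x : depth x <= #|{: T * T}| by apply: max_card.
rewrite /depth_rank ltn_lex ?ltnS ?leq_subr //.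
have := pos_le u; have := pos_le v; have := depth_le u; have := depth_le v.
by case: ltngtP; case: ltngtP => //=; lia.
Qed.

Lemma depth_rank_inj : injective depth_rank.
Proof.
move=> u v ruv; apply: pos_inj; apply/eqP; apply: contraT => uv.
have := depth_rank_lt u v; have := depth_rank_lt v u; rewrite ruv ltnn.
by case: ltngtP => //= _; lia.
Qed.

Lemma card_later_nbrs_depth_rank u : #|later_nbrs e depth_rank u| <= 2.
Proof.
have sub : later_nbrs e depth_rank u \subset
    [set y | e u y && covers y u] :|: [set y | [&& e u y, ~~ covers u y & pos y < pos u]].
  apply/subsetP => y; rewrite !inE depth_rank_lt => /andP[euy].
  have eyu : e y u by rewrite e_sym.
  rewrite (ltn_depth eyu).
  rewrite (eqn_depth eyu) euy /=.
  by case: (covers y u) => //= /andP[/andP[_ ->] ->].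
apply: leq_trans (subset_leq_card sub) _; apply: leq_trans (leq_card_setU _ _).1 _.
exact: (leq_add (card_covering_nbrs u) (card_uncovered_nbrs_left u)).
Qed.

Definition upper t w := e t w && covers w t.

Lemma upper_unique t w1 w2 : upper t w1 -> upper t w2 -> w1 = w2.
Proof. by move=> /andP[e1 c1] /andP[e2 c2]; apply: covering_nbr_unique e1 e2 c1 c2. Qed.

Definition hanging :=
  [set t | (t \notin heavy e d) && [exists w, upper t w && (w \in heavy e d)]].

Definition beats t' t := [exists w, [exists w', [&& upper t w, upper t' w' &
  (depth w' < depth w) || (depth w' == depth w) && (pos t' < pos t)]]].

Definition hanging_winners :=
  [set t in hanging | ~~ [exists t', [&& t' \in hanging, e t t' & beats t' t]]].

Lemma hanging_winners_light t : t \in hanging_winners -> t \notin heavy e d.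
Proof. by rewrite !inE => /andP[/andP[-> _] _]. Qed.

Lemma hanging_upper t : t \in hanging -> exists w, upper t w.
Proof. by rewrite inE => /andP[_ /existsP[w /andP[utw _]]]; exists w. Qed.

Lemma beatsE t' t w w' : upper t w -> upper t' w' ->
  beats t' t = (depth w' < depth w) || (depth w' == depth w) && (pos t' < pos t).
Proof.
move=> utw ut'w'; apply/existsP/idP => [[w0 /existsP[w0' /and3P[ut ut' cmp]]] | cmp].
  by rewrite (upper_unique utw ut) (upper_unique ut'w' ut').
by exists w; apply/existsP; exists w'; rewrite utw ut'w' cmp.
Qed.

Lemma hanging_winners_indep : {in hanging_winners &, forall x y, ~~ e x y}.
Proof.
move=> x y /setIdP[xH nx] /setIdP[yH ny]; apply/negP => exy.
have [[wx ux] [wy uy]] := (hanging_upper xH, hanging_upper yH).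
have : beats y x || beats x y.
  by rewrite (beatsE ux uy) (beatsE uy ux); move: (pos_neq (edge_neq exy)); lia.
case/orP => b; [case/negP: nx | case/negP: ny]; apply/existsP; [exists y | exists x].
  by rewrite yH exy b.
by rewrite xH e_sym exy b.
Qed.

Definition greedy_nbrs w := [set t | [&& e w t, t \notin hanging_winners & t \notin heavy e d]].

Lemma greedy_nbr_partner w t : w \in heavy e d -> t \in greedy_nbrs w -> covers w t ->
  exists w', [/\ e w w', ~~ covers w w' &
    exists t', [/\ e t t', e w' t' & aligned w t t' w']].
Proof.
move=> wH; rewrite inE => /and3P[ewt tI tl] cwt.
have etw : e t w by rewrite e_sym.
have utw : upper t w by rewrite /upper etw cwt.
have tH : t \in hanging by rewrite inE tl; apply/existsP; exists w; rewrite utw wH.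
move: tI; rewrite inE tH negbK => /existsP[t' /and3P[t'H ett' /existsP[w0 /existsP[w']]]].
case/and3P => /(upper_unique utw) <- /andP[et'w' cw't'] cmp.
have nt't : ~~ covers t' t.
  apply: contraL t'H => ct't; rewrite /hanging inE.
  have ut : upper t t' by rewrite /upper ett' ct't.
  by rewrite (upper_unique ut utw) wH.
have ntt' : ~~ covers t t'.
  apply: contraL t'H => ctt'; rewrite /hanging inE negb_and; apply/orP; right.
  apply/existsPn => w''; apply/negP => /andP[ut'' w''H].
  have et't : e t' t by rewrite e_sym.
  have ut't : upper t' t by rewrite /upper et't ctt'.
  by move: w''H; rewrite -(upper_unique ut't ut'') (negbTE tl).
have ew't' : e w' t' by rewrite e_sym.
have [eww' al] := covering_nbrs_square ett' ntt' nt't ewt cwt ew't' cw't'.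
exists w'; split=> //; last by exists t'.
by rewrite -(ltn_depth eww'); move: cmp; case: ltngtP.
Qed.

(* Besides its at most 3 uncovered neighbors, w has at most as many covered greedy
   neighbors t: each loses to some t' whose upper neighbor w' is an uncovered
   neighbor of w, and distinct t give distinct w'. *)
Lemma card_greedy_nbrs_heavy w : w \in heavy e d -> #|greedy_nbrs w| <= 6.
Proof.
move=> wH; set A := [set t | e w t && ~~ covers w t]; set B := greedy_nbrs w :\: A.
have Bcov t : t \in B -> t \in greedy_nbrs w /\ covers w t.
  move=> /setDP[tu]; rewrite inE => nA; split=> //.
  by move: tu nA; rewrite inE => /and3P[-> _ _] /negPn.
pose partner x w' := [exists t', [&& e x t', e w' t', e w w', ~~ covers w w' & aligned w x t' w']].
have [g gP] : exists g : T -> T, forall x, x \in B -> partner x (g x).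
  apply: (@fin_all_exists T (fun=> T) (fun x y => x \in B -> partner x y)) => x.
  have [/Bcov[xu cwx] | _] := boolP (x \in B); last by exists w.
  have [w' [eww' nww' [t' [ext' ew't' al]]]] := greedy_nbr_partner wH xu cwx.
  by exists w' => _; apply/existsP; exists t'; rewrite ext' ew't' eww' nww' al.
have gA x : x \in B -> g x \in A.
  by move/gP => /existsP[t' /and5P[_ _ eww' nww' _]]; rewrite inE eww' nww'.
have g_inj : {in B &, injective g}.
  move=> t1 t2 /[dup] /gP /existsP[t1' /and5P[e1 e1' _ _ al1]] /Bcov[t1u _].
  move=> /[dup] /gP /existsP[t2' /and5P[e2 e2' _ _ al2]] /Bcov[t2u _] gt.
  move: t1u t2u; rewrite !inE => /and3P[ewt1 _ _] /and3P[ewt2 _ _]; rewrite gt in e1' al1.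
  exact: (aligned_square_unique ewt1 ewt2 e1 e2 e1' e2' al1 al2).
have cardB : #|B| <= #|A|.
  rewrite -(card_in_imset g_inj); apply: subset_leq_card; apply/subsetP => a.
  by case/imsetP => t tB ->; apply: gA.
have cardA : #|A| <= 3 := card_uncovered_nbrs w.
have : #|greedy_nbrs w :&: A| <= #|A| by apply/subset_leq_card/subsetIr.
by rewrite -(cardsID A (greedy_nbrs w)) -/B; lia.
Qed.

Lemma outerplanar_colorable b : 6 <= d -> #|heavy e d| + (3 * d).+1 <= b -> ab_colorable e 1 b.
Proof.
move=> d6; apply: (ab_colorable1_split e_sym (I := hanging_winners) depth_rank_inj).
- exact: hanging_winners_indep.
- exact: hanging_winners_light.
move=> u uI uH; rewrite ltnS.
apply: leq_trans (card_later_dist_le2 e_sym e_irr (k := 2) (m := d) depth_rank_inj _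
  card_later_nbrs_depth_rank _) _.
- by rewrite uI uH.
- move=> z _; have [zH | zl] := boolP (z \in heavy e d).
    exact: leq_trans (card_greedy_nbrs_heavy zH) d6.
  apply: (@leq_trans (deg e z)); last by rewrite -notin_heavy.
  by apply: subset_leq_card; apply/subsetP => y; rewrite !inE => /andP[->].
- by move: uH; rewrite notin_heavy; lia.
Qed.

End Outerplanar.

Section Bounds.
Variables (T : finType) (e : rel T).
Hypotheses (e_sym : symmetric e) (e_irr : irreflexive e).

Lemma forest_ab_colorable b : forest e -> 32 * #|T| <= b * b -> ab_colorable e 1 b.
Proof.
move=> e_forest hb; have [small | big] := leqP #|T| b; first exact: ab_colorable1_of_card.
have [r [r_inj r_tree]] := forest_rank e_sym e_irr e_forest.
have [m [m_lo m_hi]] : exists m, 2 * m <= b /\ b <= 2 * m + 1.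
  by exists b./2; rewrite -{2 4}(odd_double_half b); case: (odd b) => /=; lia.
have m_pos : 0 < m by nia.
apply: (forest_colorable e_sym e_irr (d := m.-1) r_inj r_tree).
have := card_heavy_le e_sym e_irr m.-1 r_inj r_tree; rewrite prednK //; nia.
Qed.

Lemma outerplanar_ab_colorable b : triangle_free e -> outerplanar e ->
  544 * #|T| <= 5 * (b.+1 * b.+1) -> ab_colorable e 1 b.
Proof.
move=> e_tf [pos [pos_inj e_nc]] hb; have [small | big] := leqP #|T| b.
  exact: ab_colorable1_of_card.
have [m [m_lo m_hi]] : exists m, 6 * m <= b.+1 /\ b.+1 <= 6 * m + 5.
  by exists (b.+1 %/ 6); have := divn_eq b.+1 6; have := ltn_pmod b.+1 (isT : 0 < 6); lia.
have m7 : 7 <= m by nia.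
apply: (outerplanar_colorable e_sym e_irr pos_inj (d := m.-1) e_nc e_tf); first by lia.
have := card_heavy_le e_sym e_irr m.-1 (depth_rank_inj (e := e) pos_inj)
  (card_later_nbrs_depth_rank e_sym pos_inj e_nc e_tf).
by rewrite prednK; nia.
Qed.

End Bounds.

Local Open Scope R_scope.

Lemma sqr_le_of_mul_sqrt_le c x y : 0 <= c -> 0 <= x -> c * sqrt x <= y -> c * c * x <= y * y.
Proof.
move=> c0 x0 le; have cx0 : 0 <= c * sqrt x by apply: Rmult_le_pos => //; apply: sqrt_pos.
have := Rmult_le_compat _ _ _ _ cx0 cx0 le le.
by rewrite -(sqrt_sqrt x x0); nra.
Qed.

Lemma forest_bound (n b : nat) : 4 * sqrt 2 * sqrt (INR n) <= INR b -> (32 * n <= b * b)%N.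
Proof.
move=> le; have c0 : 0 <= 4 * sqrt 2 by have := sqrt_pos 2; lra.
have := sqr_le_of_mul_sqrt_le c0 (pos_INR n) le.
have -> : 4 * sqrt 2 * (4 * sqrt 2) = 32 by have := sqrt_sqrt 2; nra.
have n32 : INR 32 = 32 by rewrite INR_IZR_INZ.
by move=> h; apply/leP/INR_le; rewrite !mult_INR n32.
Qed.

Lemma outerplanar_bound (n b : nat) :
  4 * sqrt (34 / 5) * sqrt (INR n) - 1 <= INR b -> (544 * n <= 5 * (b.+1 * b.+1))%N.
Proof.
move=> le; have c0 : 0 <= 4 * sqrt (34 / 5) by have := sqrt_pos (34 / 5); lra.
have := @sqr_le_of_mul_sqrt_le _ _ (INR b.+1) c0 (pos_INR n); rewrite S_INR => /(_ ltac:(lra)).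
have -> : 4 * sqrt (34 / 5) * (4 * sqrt (34 / 5)) = 544 / 5 by have := sqrt_sqrt (34 / 5); nra.
have n544 : INR 544 = 544 by rewrite INR_IZR_INZ.
have n5 : INR 5 = 5 by rewrite INR_IZR_INZ.
by move=> h; apply/leP/INR_le; rewrite !mult_INR n544 n5 S_INR; lra.
Qed.

Theorem mainTheorem16 (T : finType) (e : rel T) :
  simple_graph e ->
  (forest e ->
     forall b : nat, Rle (Rmult (Rmult 4 (sqrt 2)) (sqrt (INR #|T|))) (INR b) ->
       ab_colorable e 1 b) /\
  (triangle_free e -> outerplanar e ->
     forall b : nat, Rle (Rminus (Rmult (Rmult 4 (sqrt (Rdiv 34 5))) (sqrt (INR #|T|))) 1) (INR b) ->
       ab_colorable e 1 b).
Proof.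
move=> [e_sym e_irr]; split=> [e_forest b /forest_bound | e_tf e_op b /outerplanar_bound].
- exact: forest_ab_colorable.
- exact: outerplanar_ab_colorable.
Qed.
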